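(* Assume the standing setup below and let $\rho\ge0$. If $\mathcal{G}$ is a quasi-concave hill, then $\mathcal{NE}_\rho$ is a singleton, and its unique element is the unique optimizer of the problem $\max_{\mathbf{x}} U(\mathbf{x})$ subject to $\mathbf{x}\in\mathcal{S}_\rho$, where $U(\mathbf{x})=\sum_{i\in\mathcal{V}}[p_i(\mathbf{x}_i)-p_i(0)]$.
   Context: Standing setup: $\mathcal{G}=(\mathcal{V},\mathcal{E})$ is a finite, connected, undirected graph; $\mathcal{N}^i$ denotes the set of neighbours of node $i$. For $\rho\ge0$, $\mathcal{S}_\rho=\{\mathbf{x}\in\mathbb{R}^{|\mathcal{V}|}:\mathbf{x}\ge 0,\ \sum_{i\in\mathcal{V}}\mathbf{x}_i=\rho\}$, and $\mathrm{supp}(\mathbf{x})=\{i:\mathbf{x}_i\neq 0\}$. For each node $i$, $p_i:[0,\infty)\to\mathbb{R}$ is twice continuously differentiable and strictly concave, and $u_i:=p_i'$ (right derivative at $0$), so each $u_i$ is strictly decreasing. The maximum payoff density parameter (MPDP) of node $i$ is $\mathbf{a}_i:=u_i(0)$. The set of Nash equilibria is $\mathcal{NE}_\rho=\{\mathbf{x}\in\mathcal{S}_\rho: u_i(\mathbf{x}_i)\ge u_j(\mathbf{x}_j)\ \forall j\in\mathcal{N}^i,\ \forall i\in\mathrm{supp}(\mathbf{x})\}$. A path $\pi(1),\dots,\pi(n)$ in $\mathcal{G}$ (distinct nodes, consecutive ones adjacent) is a path with quasi-concave MPDP's if for all $1\le k\le m\le l\le n$, $\mathbf{a}_{\pi(m)}\ge\min\{\mathbf{a}_{\pi(k)},\mathbf{a}_{\pi(l)}\}$.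 $\mathcal{G}$ is a quasi-concave hill (QCH) if between every two distinct nodes there exists a path with quasi-concave MPDP's. *)

From HB Require Import structures.
From mathcomp Require Import all_boot all_order all_algebra.
From mathcomp Require Import all_classical all_reals all_analysis.
Set Implicit Arguments. Unset Strict Implicit. Unset Printing Implicit Defensive.
Import Order.TTheory GRing.Theory Num.Theory.
Import numFieldNormedType.Exports.
Local Open Scope classical_set_scope.
Local Open Scope ring_scope.

Section Defs.
Variables (R : realType) (V : finType).

Definition simplexS (rho : R) : set (V -> R) :=
  [set x | (forall i, 0 <= x i) /\ \sum_(i : V) x i = rho].

(* Nash equilibria: E is the (symmetric) adjacency relation, u the densities *)
Definition NE (E : rel V) (u : V -> R -> R) (rho : R) : set (V -> R) :=
  [set x | simplexS rho x /\
     (forall i, x i != 0 -> forall j, E i j -> u j (x j) <= u i (x i))].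

Definition Upot (p : V -> R -> R) (x : V -> R) : R :=
  \sum_(i : V) (p i (x i) - p i 0).

(* the path i :: t (distinct nodes, consecutive adjacent) from i to j
   has quasi-concave MPDP's a *)
Definition qc_path (E : rel V) (a : V -> R) (i j : V) (t : seq V) : Prop :=
  let s := i :: t in
  [/\ uniq s, path E i t, last i t = j &
   forall k m l : nat, (k <= m <= l)%N -> (l < size s)%N ->
     Num.min (a (nth i s k)) (a (nth i s l)) <= a (nth i s m)].

Definition QCH (E : rel V) (a : V -> R) : Prop :=
  forall i j : V, i != j -> exists t : seq V, qc_path E a i j t.

End Defs.

(* p is twice continuously differentiable on [0,oo) (one-sided at 0),
   with p' = u (right derivative at 0). *)
Definition C2_nonneg (R : realType) (p u : R -> R) : Prop :=
  exists u' : R -> R,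
    [/\ (forall x : R, 0 < x -> is_derive x 1 p (u x)),
        (fun h : R => h^-1 * (p h - p 0)) @ 0^'+ --> u 0,
        (forall x : R, 0 < x -> is_derive x 1 u (u' x)),
        (fun h : R => h^-1 * (u h - u 0)) @ 0^'+ --> u' 0 &
        {within [set x : R | 0 <= x], continuous u'}].

Definition strictly_concave_nonneg (R : realType) (p : R -> R) : Prop :=
  forall x y t : R, 0 <= x -> 0 <= y -> x != y -> 0 < t < 1 ->
    t * p x + (1 - t) * p y < p (t * x + (1 - t) * y).

From HB Require Import structures.
From mathcomp Require Import all_boot all_order all_algebra.
From mathcomp Require Import all_classical all_reals all_analysis.
From mathcomp Require Import ring lra.
Import Order.TTheory GRing.Theory Num.Theory.
Import numFieldNormedType.Exports.
Local Open Scope classical_set_scope.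
Local Open Scope ring_scope.

(* Call a point x of the simplex S_rho balanced when every node of its support
   has the largest marginal density: x_i <> 0 implies u_j(x_j) <= u_i(x_i) for
   all j (the first-order optimality condition of the potential U on S_rho).
   The proof shows that both the Nash equilibria and the maximizers of U are
   exactly the balanced points, and that there is exactly one balanced point.
   - One-node calculus: each p_i is locally linear with slope u_i (one-sided
     at 0), lies below its tangents, hence u_i is strictly decreasing; a small
     transfer of mass towards a node of higher density is profitable.
   - Balanced points of S_rho are unique, by a mass-exchange argument.
   - A maximizer of U is balanced, by the profitable transfer.
   - On a quasi-concave hill a Nash equilibrium is balanced: along a path with
     quasi-concave MPDP's from a supported node i to a node j of higher
     density, the Nash condition forces every node to be supported.
   - A maximizer exists by the extreme value theorem on the compact simplex. *)

Lemma derive_quotient_near {R : realType} {p : R -> R} {x l : R} :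
  is_derive x 1 p l -> forall e : R, 0 < e -> exists2 d : R, 0 < d &
    forall h, h != 0 -> `|h| < d -> `|l - h^-1 * (p (x + h) - p x)| < e.
Proof.
move=> [dp <-] e e0.
have /cvgrPdist_lt/(_ e e0) := dp.
rewrite /dnbhs /within /= => /nbhs_ballP [d d0 Hd].
exists d => // h h0 hd.
have := Hd h; rewrite /ball /= sub0r normrN => /(_ hd h0).
by rewrite /GRing.scale /= mulr1 (addrC h x).
Qed.

Lemma right_limit_near {R : realType} {f : R -> R} {l : R} :
  f @ 0^'+ --> l -> forall e : R, 0 < e -> exists2 d : R, 0 < d &
    forall h, 0 < h -> h < d -> `|l - f h| < e.
Proof.
move=> /cvgrPdist_lt fl e e0; have := fl e e0.
rewrite /at_right /within /= => /nbhs_ballP [d d0 Hd].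
exists d => // h h0 hd.
by apply: (Hd h) => //; rewrite /ball /= sub0r normrN gtr0_norm.
Qed.

Definition clamp0 {R : realType} (t : R) : R := if t < 0 then 0 else t.

Section OneNode.
Context {R : realType} {p u : R -> R}.
Hypotheses (p_C2 : C2_nonneg p u) (p_concave : strictly_concave_nonneg p).

Lemma local_linear {x} : 0 <= x -> forall {e : R}, 0 < e -> exists2 d : R, 0 < d &
  forall h, `|h| < d -> 0 <= x + h -> `|p (x + h) - p x - u x * h| <= e * `|h|.
Proof.
move=> x0 e e0; case: p_C2 => u' [p_der p_rder _ _ _].
have [d d0 Hq] : exists2 d : R, 0 < d & forall h, h != 0 -> `|h| < d ->
    0 <= x + h -> `|u x - h^-1 * (p (x + h) - p x)| < e.
  have [xgt0|] := ltrP 0 x.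
    have [d d0 Hd] := derive_quotient_near (p_der x xgt0) e e0.
    by exists d => // h h0 hd _; exact: Hd.
  move=> xle0; have -> : x = 0 by apply/eqP; rewrite eq_le xle0 x0.
  have [d d0 Hd] := right_limit_near p_rder e e0.
  exists d => // h h0 hd; rewrite add0r => hge0.
  have hgt0 : 0 < h by rewrite lt_neqAle eq_sym h0 hge0.
  by apply: Hd; rewrite // -(gtr0_norm hgt0).
exists d => // h hd xh0.
have [->|h0] := eqVneq h 0; first by rewrite addr0 !mulr0 subrr subr0 normr0 mulr0.
have -> : p (x + h) - p x - u x * h = - ((u x - h^-1 * (p (x + h) - p x)) * h).
  by rewrite mulrBl mulrAC mulVf // mul1r opprB.
by rewrite normrN normrM ler_pM2r ?normr_gt0 // ltW // Hq.
Qed.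

Lemma concave_weak {x y t} : 0 <= x -> 0 <= y -> 0 <= t <= 1 ->
  t * p x + (1 - t) * p y <= p (t * x + (1 - t) * y).
Proof.
move=> x0 y0 /andP[t0 t1].
have [->|xy] := eqVneq x y.
  by rewrite -!mulrDl subrKC !mul1r.
have [->|tn0] := eqVneq t 0; first by rewrite !mul0r !add0r subr0 !mul1r.
have [->|tn1] := eqVneq t 1; first by rewrite subrr !mul0r !addr0 !mul1r.
apply/ltW/p_concave => //.
by rewrite lt_neqAle eq_sym tn0 t0 /= lt_neqAle tn1 t1.
Qed.

(* A concave function lies below each of its tangent lines: otherwise the
   chords from [x] towards [z], of slope at least [(p z - p x) / (z - x)],
   would contradict the local linearity of [p] at [x]. *)
Lemma tangent_above {x z} : 0 <= x -> 0 <= z -> p z <= p x + u x * (z - x).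
Proof.
move=> x0 z0; have [->|zx] := eqVneq z x; first by rewrite subrr mulr0 addr0.
set w := z - x; set c := p z - p x.
have wn0 : w != 0 by rewrite subr_eq0.
rewrite -lerBlDl -/c leNgt; apply/negP => gap.
have aw : 0 < `|w| by rewrite normr_gt0.
pose e := (c - u x * w) / (2 * `|w|).
have e0 : 0 < e by rewrite divr_gt0 ?mulr_gt0 // subr_gt0.
have [d d0 Hd] := local_linear x0 e0.
pose t := d / (d + `|w|).
have dw0 : 0 < d + `|w| by rewrite addr_gt0.
have t0 : 0 < t by rewrite divr_gt0.
have t1 : t < 1 by rewrite ltr_pdivrMr // mul1r ltrDl.
have hd : `|t * w| < d.
  by rewrite normrM gtr0_norm // mulrAC ltr_pdivrMr // ltr_pM2l // ltrDr.
have xh : x + t * w = t * z + (1 - t) * x by rewrite /w; ring.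
have xh0 : 0 <= x + t * w by rewrite xh; nra.
have chord : t * c <= p (x + t * w) - p x.
  have t01 : 0 <= t <= 1 by rewrite !ltW.
  have := concave_weak z0 x0 t01; rewrite -xh /c; lra.
have := Hd _ hd xh0.
have -> : e * `|t * w| = t * (c - u x * w) / 2.
  by rewrite normrM (gtr0_norm t0) /e; field; rewrite gt_eqF.
move/(le_trans (ler_norm _)); nra.
Qed.

Lemma u_decreasing x y : 0 <= x -> x < y -> u y < u x.
Proof.
move=> x0 xy; have y0 : 0 <= y by apply: le_trans x0 (ltW xy).
pose m := 2^-1 * x + (1 - 2^-1) * y.
have m0 : 0 <= m by rewrite /m; lra.
have mid : 2^-1 * p x + (1 - 2^-1) * p y < p m.
  by apply: p_concave; rewrite // ?lt_eqF //; lra.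
have T1 := tangent_above x0 m0; have T2 := tangent_above y0 m0.
have e1 : m - x = 2^-1 * (y - x) by rewrite /m; field.
have e2 : m - y = - (2^-1 * (y - x)) by rewrite /m; field.
rewrite e1 in T1; rewrite e2 in T2.
have d0 : 0 < 2^-1 * (y - x) by rewrite mulr_gt0 // ?invr_gt0 // subr_gt0.
by rewrite -(ltr_pM2r d0); nra.
Qed.

(* [p] extended by [p 0] on negative reals is continuous everywhere; this is
   what makes the potential continuous on a compact box. *)
Lemma p_clamp_continuous : continuous (fun t : R => p (clamp0 t)).
Proof.
move=> t; apply/cvgrPdist_lt => e e0; apply/nbhs_ballP.
have [tlt0|tge0] := ltrP t 0.
  exists (- t); first by rewrite /= oppr_gt0.
  move=> s; rewrite /ball_ /= ltr_norml => /andP[hs _].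
  have slt0 : s < 0 by lra.
  by rewrite /clamp0 tlt0 slt0 subrr normr0.
have [d d0 Hd] := local_linear tge0 ltr01.
pose K := `|u t| + 1.
have K0 : 0 < K by rewrite /K ltr_wpDl.
exists (Num.min d (e / K)); first by rewrite /= lt_min d0 divr_gt0.
move=> s; rewrite /ball_ /= lt_min => /andP[hs1 hs2].
have -> : clamp0 t = t by rewrite /clamp0 ltNge tge0.
pose h := clamp0 s - t.
have hle : `|h| <= `|t - s|.
  rewrite /h /clamp0; have [s0|s0] := ltrP s 0; last by rewrite distrC.
  rewrite sub0r normrN (ger0_norm tge0) ger0_norm; lra.
have th0 : 0 <= t + h by rewrite /h addrC subrK /clamp0; case: ltrP.
have -> : clamp0 s = t + h by rewrite /h addrC subrK.
have Hh := Hd h (le_lt_trans hle hs1) th0.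
have Kh : K * `|h| < e by rewrite mulrC -ltr_pdivlMr // (le_lt_trans hle).
rewrite /K mulrDl mul1r in Kh; rewrite mul1r in Hh.
have := ler_normD (p (t + h) - p t - u t * h) (u t * h).
rewrite subrK distrC normrM; lra.
Qed.

End OneNode.

Lemma profitable_transfer {R : realType} {p1 u1 p2 u2 : R -> R} {x x' : R} :
  C2_nonneg p1 u1 -> C2_nonneg p2 u2 ->
  0 <= x -> 0 < x' -> u2 x' < u1 x ->
  exists eps : R, [/\ 0 < eps, eps <= x' &
    p2 x' - p2 (x' - eps) < p1 (x + eps) - p1 x].
Proof.
move=> C1 C2 x0 x'0 ux.
pose e := (u1 x - u2 x') / 3.
have e0 : 0 < e by rewrite /e divr_gt0 // subr_gt0.
have [d1 d10 H1] := local_linear C1 x0 e0.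
have [d2 d20 H2] := local_linear C2 (ltW x'0) e0.
pose m := Num.min d1 (Num.min d2 x'); pose eps := m / 2.
have m0 : 0 < m by rewrite !lt_min d10 d20 x'0.
have [md1 md2 mx'] : [/\ m <= d1, m <= d2 & m <= x'].
  by rewrite !ge_min !lexx !orbT.
have eps0 : 0 < eps by rewrite /eps divr_gt0.
have [ed1 ed2 ex'] : [/\ eps < d1, eps < d2 & eps < x'] by rewrite /eps; split; lra.
exists eps; split => //; first exact: ltW.
have := H1 eps; rewrite gtr0_norm // => /(_ ed1 (addr_ge0 x0 (ltW eps0))).
have := H2 (- eps); rewrite normrN gtr0_norm // => /(_ ed2 ltac:(lra)).
have gain : 0 < (u1 x - u2 x') * eps by rewrite mulr_gt0 // subr_gt0.
rewrite !ler_norml /e => /andP[B _] /andP[A _]; nra.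
Qed.

Lemma eq_of_le_sum {R : numDomainType} {V : finType} (x y : V -> R) :
  (forall i, y i <= x i) -> \sum_i x i = \sum_i y i -> x = y.
Proof.
move=> yx sxy; apply: funext => i; apply/eqP; rewrite -subr_eq0.
have gap0 : \sum_(k | true) (x k - y k) = 0 by rewrite sumrB sxy subrr.
by apply/eqP/(psumr_eq0P _ gap0) => // k _; rewrite subr_ge0.
Qed.

Lemma sum_pair {R : nmodType} {V : finType} {g : V -> R} {i j : V} : i != j ->
  (forall k, k != i -> k != j -> g k = 0) -> \sum_k g k = g i + g j.
Proof.
move=> ij g0; rewrite (bigD1 i) //= (bigD1 j) 1?eq_sym //=.
by rewrite big1 ?addr0 // => k /andP[ki kj]; exact: g0.
Qed.

Lemma qc_path_above {R : realType} {V : finType} {E : rel V} {a : V -> R}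
    {i j t lam} :
  qc_path E a i j t -> lam < a i -> lam < a j -> {in i :: t, forall k, lam < a k}.
Proof.
move=> [_ _ last_j qc] ai aj k kt.
have last_nth : nth i (i :: t) (size t) = j by rewrite -last_j (nth_last i (i :: t)).
have km : (index k (i :: t) <= size t)%N by rewrite -ltnS index_mem.
have := qc 0%N _ (size t) km (ltnSn _); rewrite nth_index // last_nth /=.
by apply: lt_le_trans; rewrite lt_min ai aj.
Qed.

Section Balanced.
Context {R : realType} {V : finType}.

Definition decreasing_densities (u : V -> R -> R) : Prop :=
  forall i a b, 0 <= a -> a < b -> u i b < u i a.

Definition balanced (u : V -> R -> R) (x : V -> R) : Prop :=
  forall i, x i != 0 -> forall j, u j (x j) <= u i (x i).

Definition nash_condition (E : rel V) (u : V -> R -> R) (x : V -> R) : Prop :=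
  forall i, x i != 0 -> forall j, E i j -> u j (x j) <= u i (x i).

Context {u : V -> R -> R}.
Hypothesis u_decr : decreasing_densities u.

(* Balanced points of the simplex are unique: if [y i < x i] and [x j < y j],
   the balance of [x] at [i] and of [y] at [j] contradict monotonicity. *)
Lemma balanced_unique {rho : R} {x y : V -> R} : simplexS rho x -> simplexS rho y ->
  balanced u x -> balanced u y -> x = y.
Proof.
move=> [x0 sx] [y0 sy] bal_x bal_y.
have no_cross i j : y i < x i -> x j < y j -> False.
  move=> yx xy.
  have xi0 : x i != 0 by rewrite gt_eqF // (le_lt_trans (y0 i)).
  have yj0 : y j != 0 by rewrite gt_eqF // (le_lt_trans (x0 j)).
  have := bal_x i xi0 j; have := bal_y j yj0 i.
  have := u_decr i _ _ (y0 i) yx; have := u_decr j _ _ (x0 j) xy; lra.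
have [/existsP [i yxi]|no_drop] := boolP [exists i, y i < x i].
  apply: eq_of_le_sum; last by rewrite sx sy.
  by move=> j; rewrite leNgt; apply/negP => /(no_cross i j yxi).
apply/esym/eq_of_le_sum; last by rewrite sx sy.
move=> j; rewrite leNgt; apply/negP => xyj; move/negP: no_drop; apply.
by apply/existsP; exists j.
Qed.

Lemma nash_spreads {E y lam a t} : nash_condition E u y ->
  path E a t -> y a != 0 -> u a (y a) <= lam ->
  {in t, forall k, lam < u k 0} ->
  {in a :: t, forall k, y k != 0 /\ u k (y k) <= lam}.
Proof.
move=> ne; elim: t a => [|b t IH] a /= Eat ya0 ua above k.
  by rewrite inE => /eqP ->.
case/andP: Eat => Eab Ebt.
have ub : u b (y b) <= lam by apply: le_trans (ne a ya0 b Eab) ua.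
have yb0 : y b != 0.
  by apply: contraTneq ub => ->; rewrite -ltNge above ?mem_head.
rewrite inE => /predU1P [-> //|kbt].
apply: (IH b Ebt yb0 ub _ k kbt) => m mt.
by apply: above; rewrite inE mt orbT.
Qed.

(* On a quasi-concave hill every Nash equilibrium is balanced: a node [j]
   with higher density than a supported node [i] would be reached by the
   Nash propagation along a quasi-concave path from [i] to [j]. *)
Lemma nash_balanced {E : rel V} {rho : R} {y : V -> R} :
  QCH E (fun i => u i 0) -> NE E u rho y -> balanced u y.
Proof.
move=> qch [[y0 _] ne] i yi0 j; rewrite leNgt; apply/negP => lam_lt.
have ij : i != j by apply: contraTneq lam_lt => ->; rewrite ltxx.
have [t qc] := qch i j ij.
have yi_pos : 0 < y i by rewrite lt_neqAle eq_sym yi0 y0.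
have lam_i : u i (y i) < u i 0 by apply: u_decr.
have lam_j : u i (y i) < u j 0.
  apply: lt_le_trans lam_lt _; have [->//|yj0] := eqVneq (y j) 0.
  by apply/ltW/u_decr => //; rewrite lt_neqAle eq_sym yj0 y0.
have above := qc_path_above qc lam_i lam_j.
case: qc => _ Eit last_j _.
have above_t : {in t, forall k, u i (y i) < u k 0}.
  by move=> k kt; apply: above; rewrite inE kt orbT.
have := nash_spreads ne Eit yi0 (lexx _) above_t _ (mem_last i t).
by rewrite last_j leNgt lam_lt => -[].
Qed.

(* Every maximizer of the potential on the simplex is balanced: otherwise a
   small transfer of mass from a supported node [i] to a node [j] with higher
   density strictly increases the potential. *)
Lemma maximizer_balanced {p : V -> R -> R} {rho : R} {y : V -> R} :
  (forall i, C2_nonneg (p i) (u i)) -> simplexS rho y ->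
  (forall z, simplexS rho z -> Upot p z <= Upot p y) -> balanced u y.
Proof.
move=> p_C2 [y0 sy] y_max i yi0 j; rewrite leNgt; apply/negP => uij.
have ij : i != j by apply: contraTneq uij => ->; rewrite ltxx.
have yi_pos : 0 < y i by rewrite lt_neqAle eq_sym yi0 y0.
have [eps [eps0 eps_yi gain]] :=
  profitable_transfer (p_C2 j) (p_C2 i) (y0 j) yi_pos uij.
pose z k := if k == j then y j + eps else if k == i then y i - eps else y k.
have [zi zj] : z i = y i - eps /\ z j = y j + eps.
  by split; rewrite /z eqxx ?(negbTE ij).
have zk k : k != i -> k != j -> z k = y k.
  by move=> ki kj; rewrite /z (negbTE ki) (negbTE kj).
have z_simplex : simplexS rho z.
  split=> [k|].
    rewrite /z; case: ifP => _; first by rewrite addr_ge0 // ltW.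
    by case: ifP => _; rewrite ?subr_ge0.
  apply/eqP; rewrite -subr_eq0 -sy -sumrB (sum_pair ij).
    by rewrite zi zj; apply/eqP; ring.
  by move=> k ki kj; rewrite zk // subrr.
have := y_max z z_simplex; rewrite leNgt => /negP; apply.
rewrite -subr_gt0 /Upot -sumrB (sum_pair ij); first by rewrite zi zj; lra.
by move=> k ki kj; rewrite zk // subrr.
Qed.

End Balanced.

Section Existence.
Context {R : realType} {V : finType}.

Definition coords (x : V -> R) : 'rV[R]_#|V| := \row_k x (enum_val k).
Definition of_coords (v : 'rV[R]_#|V|) : V -> R := fun i => v ord0 (enum_rank i).

Lemma coordsK x : of_coords (coords x) = x.
Proof. by apply: funext => i; rewrite /of_coords mxE enum_rankK. Qed.

Lemma continuous_sum {T : topologicalType} (F : V -> T -> R^o) :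
  (forall i, continuous (F i)) -> continuous (fun v => \sum_i F i v).
Proof. by move=> F_cont; apply: continuous_big => //; exact: add_continuous. Qed.

(* The simplex, read in coordinates, is compact: it is the intersection of
   the box [[0, rho]^V] with a level set of the (continuous) total mass. *)
Lemma simplex_coords_compact rho :
  compact [set v | simplexS rho (of_coords v)].
Proof.
pose mass (v : 'rV[R]_#|V|) : R^o := \sum_i of_coords v i.
have -> : [set v | simplexS rho (of_coords v)] =
    [set v : 'rV[R]_#|V| | forall k, `[0, rho]%classic (v ord0 k)] `&` mass @^-1` [set rho].
  apply/seteqP; split => v /=.
    move=> [v0 sv]; split=> // k; rewrite in_itv /=.
    have vk : v ord0 k = of_coords v (enum_val k) by rewrite /of_coords enum_valK.
    by rewrite vk v0 -sv (bigD1 (enum_val k)) //= lerDl sumr_ge0.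
  move=> [box sv]; split=> // i.
  by have := box (enum_rank i); rewrite /= in_itv /= => /andP[].
apply: compact_closedI.
  by apply: (@rV_compact _ _ (fun=> `[0, rho]%classic)) => _; exact: segment_compact.
apply: (continuous_closedP _).1; last exact: closed_eq.
by apply: continuous_sum => i; exact: coord_continuous.
Qed.

Lemma simplex_nonempty (rho : R) : (0 < #|V|)%N -> 0 <= rho ->
  exists x : V -> R, simplexS rho x.
Proof.
move=> V0 rho0; have [i0 _] := card_gt0P V0.
exists (fun i => if i == i0 then rho else 0); split.
  by move=> i; case: eqP.
by rewrite (bigD1 i0) //= eqxx big1 ?addr0 // => i /negbTE ->.
Qed.

(* Weierstrass: the potential attains its maximum on the simplex, using the
   continuous extension [p i \o clamp0] of each payoff. *)
Lemma potential_maximizer_exists {p u : V -> R -> R} {rho : R} :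
  (0 < #|V|)%N -> (forall i, C2_nonneg (p i) (u i)) -> 0 <= rho ->
  exists2 y, simplexS rho y &
    forall z, simplexS rho z -> Upot p z <= Upot p y.
Proof.
move=> V0 p_C2 rho0.
pose A := [set v | simplexS rho (of_coords v)].
pose P (v : 'rV[R]_#|V|) : R^o := \sum_i p i (clamp0 (of_coords v i)).
have [x0 x0_simplex] := simplex_nonempty rho V0 rho0.
have A0 : A !=set0 by exists (coords x0); rewrite /A /= coordsK.
have P_cont : continuous P.
  apply: continuous_sum => i v.
  apply: (@continuous_comp _ _ _ (fun v : 'rV[R]_#|V| => of_coords v i)
    (fun t => (p i (clamp0 t) : R^o))); first exact: coord_continuous.
  exact: (p_clamp_continuous (p_C2 i)).
have [c cA c_max] := EVT_max_rV A0 (simplex_coords_compact rho)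
  (continuous_subspaceT P_cont).
have UP v : A v -> Upot p (of_coords v) = P v - \sum_i p i 0.
  move=> [v0 _]; rewrite /Upot sumrB; congr (_ - _).
  by apply: eq_bigr => i _; rewrite /clamp0 ltNge v0.
rewrite inE in cA; exists (of_coords c) => // z z_simplex.
have Az : A (coords z) by rewrite /A /= coordsK.
rewrite -(coordsK z) (UP _ Az) (UP _ cA) lerD2r.
by apply: c_max; rewrite inE.
Qed.

End Existence.

Theorem mainTheorem3 (R : realType) (V : finType) (E : rel V)
    (p u : V -> R -> R) (rho : R) :
  symmetric E -> irreflexive E -> (forall i j : V, connect E i j) ->
  (0 < #|V|)%N ->
  (forall i : V, C2_nonneg (p i) (u i)) ->
  (forall i : V, strictly_concave_nonneg (p i)) ->
  0 <= rho ->
  QCH E (fun i => u i 0) ->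
  exists x : V -> R,
    (forall y : V -> R, NE E u rho y <-> y = x) /\
    simplexS rho x /\
    (forall y : V -> R, simplexS rho y -> Upot p y <= Upot p x) /\
    (forall y : V -> R, simplexS rho y ->
       (forall z : V -> R, simplexS rho z -> Upot p z <= Upot p y) -> y = x).
Proof.
move=> _ _ _ V0 p_C2 p_concave rho0 qch.
have u_decr : decreasing_densities u.
  by move=> i a b; exact: u_decreasing (p_C2 i) (p_concave i) a b.
have [x x_simplex x_max] := potential_maximizer_exists V0 p_C2 rho0.
have x_bal := maximizer_balanced p_C2 x_simplex x_max.
have balanced_is_x y : simplexS rho y -> balanced u y -> y = x.
  by move=> y_simplex y_bal; apply: (balanced_unique u_decr y_simplex x_simplex).
exists x; split.
  move=> y; split=> [y_ne|->]; last by split=> // i xi0 j _; exact: x_bal.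
  by apply: balanced_is_x; [case: y_ne | exact: (nash_balanced u_decr qch y_ne)].
do 2!split=> //; move=> y y_simplex y_max.
by apply: balanced_is_x => //; exact: (maximizer_balanced p_C2 y_simplex y_max).
Qed.
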